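(* Let $q\ge 2$, $u\ge 1$, $Q\ge 2$, $n\ge1$, $N\ge 1$ be integers and let $0=\eta_0<\eta_1<\cdots<\eta_Q$ be integer thresholds with $\eta_Q>(q-1)u$ and $q-1\ge\eta_1$. If $\mathbf{C}_b$ is a binary $u$-disjunct matrix of size $n\times N$, then the columns of $(q-1)\mathbf{C}_b$ form a $[q;Q;\boldsymbol{\eta};u]$-SQ-disjunct code of length $n$ and size $N$, where $\boldsymbol{\eta}=(\eta_1,\dots,\eta_Q)$. Consequently, for all $n,N$, if a binary $u$-disjunct code of length $n$ and size $N$ exists, then a $[q;Q;\boldsymbol{\eta};u]$-SQ-disjunct code of length $n$ and size $N$ exists (so the rate $\frac{\log N}{n}$ of the best $[q;Q;\boldsymbol{\eta};u]$-SQ-disjunct code is at least that of the best binary $u$-disjunct code).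
   Context: A binary $n\times N$ matrix is $u$-disjunct if for every column $\mathbf{c}$ and every set $S$ of at most $u$ columns other than $\mathbf{c}$, there is a row in which $\mathbf{c}$ has entry $1$ and every column in $S$ has entry $0$; its columns form a binary $u$-disjunct code of length $n$ and size $N$. A $q$-ary code of length $n$ is a set of distinct vectors in $\{0,1,\dots,q-1\}^n$. For a nonempty set $\mathcal{X}=\{\mathbf{x}_1,\dots,\mathbf{x}_s\}$ of at most $u$ codewords, its syndrome is the vector $\mathbf{y}_{\mathcal{X}}\in\{0,\dots,Q-1\}^n$ whose $k$-th coordinate equals the unique $r\in\{0,\dots,Q-1\}$ with $\eta_r\le\sum_{j=1}^s x_{k,j}<\eta_{r+1}$, where $x_{k,j}$ is the $k$-th coordinate of $\mathbf{x}_j$. We write $\mathcal{X}\lhd\mathcal{Z}$ ($\mathcal{X}$ is included in $\mathcal{Z}$) if $(\mathbf{y}_{\mathcal{X}})_k\le(\mathbf{y}_{\mathcal{Z}})_k$ for all $k$. A code $\mathcal{C}$ is $[q;Q;\boldsymbol{\eta};u]$-SQ-disjunct if for all $1\le s,t\le u$ and all sets $\mathcal{X},\mathcal{Z}\subseteq\mathcal{C}$ with $|\mathcal{X}|=s$, $|\mathcal{Z}|=t$, $\mathcal{X}\lhd\mathcal{Z}$ implies $\mathcal{X}\subseteq\mathcal{Z}$. *)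

From mathcomp Require Import all_boot all_order all_algebra.
Set Implicit Arguments. Unset Strict Implicit. Unset Printing Implicit Defensive.

Definition disjunct (u n N : nat) (M : 'M[bool]_(n, N)) : Prop :=
  forall (c : 'I_N) (S : {set 'I_N}), #|S| <= u -> c \notin S ->
    exists k : 'I_n, M k c && [forall j in S, ~~ M k j].

Definition qary_code (q n N : nat) (c : 'I_N -> {ffun 'I_n -> nat}) : Prop :=
  injective c /\ (forall j k, c j k < q).

(* The unique r in {0,...,Q-1} with eta r <= s < eta (r+1) (0 if none). *)
Definition level (Q : nat) (eta : nat -> nat) (s : nat) : nat :=
  odflt 0 (omap val [pick r : 'I_Q | eta r <= s < eta r.+1]).

Definition syndrome (Q : nat) (eta : nat -> nat) (n N : nat)
  (c : 'I_N -> {ffun 'I_n -> nat}) (X : {set 'I_N}) (k : 'I_n) : nat :=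
  level Q eta (\sum_(j in X) c j k).

Definition included (Q : nat) (eta : nat -> nat) (n N : nat)
  (c : 'I_N -> {ffun 'I_n -> nat}) (X Z : {set 'I_N}) : Prop :=
  forall k : 'I_n, syndrome Q eta c X k <= syndrome Q eta c Z k.

(* [q;Q;eta;u]-SQ-disjunct (the q-arity is part of qary_code). Subsets of the
   code are indexed by subsets of 'I_N, as c is injective. *)
Definition sq_disjunct (Q : nat) (eta : nat -> nat) (u n N : nat)
  (c : 'I_N -> {ffun 'I_n -> nat}) : Prop :=
  forall X Z : {set 'I_N}, 1 <= #|X| <= u -> 1 <= #|Z| <= u ->
    included Q eta c X Z -> X \subset Z.

Definition scaled_cols (q n N : nat) (M : 'M[bool]_(n, N)) :
  'I_N -> {ffun 'I_n -> nat} :=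
  fun j => [ffun k => if M k j then q.-1 else 0].

From mathcomp Require Import all_boot all_order all_algebra.

Set Implicit Arguments.
Unset Strict Implicit.
Unset Printing Implicit Defensive.

(* If x is in X but not in Z, u-disjunctness gives a row k where column x is 1
   and all columns of Z are 0. At k the syndrome of Z has level 0, while the
   sum over X lies between q-1 >= eta_1 and (q-1)|X| < eta_Q, hence has a
   positive level; so X is not included in Z. *)

Section Level.

Variables (Q : nat) (eta : nat -> nat).

Lemma eta_bracket m s : eta 0 <= s < eta m ->
  exists2 r, r < m & eta r <= s < eta r.+1.
Proof.
elim: m => [|m IHm] /andP [s_ge s_lt]; first by rewrite ltnNge s_ge in s_lt.
have [eta_m_le | s_lt_m] := leqP (eta m) s; first by exists m; rewrite ?eta_m_le.
have [|r r_lt_m hr] := IHm; first by rewrite s_ge s_lt_m.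
by exists r => //; apply: ltnW.
Qed.

Lemma level_bounds s : eta 0 <= s < eta Q ->
  eta (level Q eta s) <= s < eta (level Q eta s).+1.
Proof.
move=> hs; rewrite /level; case: pickP => [r hr | no_r] //=.
have [r r_lt_Q hr] := eta_bracket hs.
by have := no_r (Ordinal r_lt_Q); rewrite hr.
Qed.

Hypothesis eta_incr : forall i, i < Q -> eta i < eta i.+1.

Lemma leq_eta i : i <= Q -> i <= eta i.
Proof.
elim: i => [|i IHi] // i_lt_Q.
exact: leq_ltn_trans (IHi (ltnW i_lt_Q)) (eta_incr i_lt_Q).
Qed.

Lemma level0 : level Q eta 0 = 0.
Proof.
rewrite /level; case: pickP => [r /andP [eta_r_le0 _] | _] //=.
by apply/eqP; rewrite -leqn0 (leq_trans (leq_eta (ltnW (ltn_ord r)))).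
Qed.

Lemma level_gt0 s : eta 0 = 0 -> eta 1 <= s < eta Q -> 0 < level Q eta s.
Proof.
move=> eta0 /andP [s_ge s_lt].
have /andP [_] : eta (level Q eta s) <= s < eta (level Q eta s).+1.
  by apply: level_bounds; rewrite eta0 s_lt.
by rewrite lt0n; apply: contraTneq => ->; rewrite -leqNgt.
Qed.

End Level.

Section ScaledColumns.

Variables (q u n N : nat) (M : 'M[bool]_(n, N)).

Lemma scaled_cols_lt : 0 < q -> forall j k, scaled_cols q M j k < q.
Proof. by move=> q_gt0 j k; rewrite ffunE; case: (M k j); rewrite ?prednK. Qed.

Lemma sum_scaled_cols_eq0 (Z : {set 'I_N}) k :
  (forall j, j \in Z -> ~~ M k j) -> \sum_(j in Z) scaled_cols q M j k = 0.
Proof. by move=> Mk0; rewrite big1 // => j /Mk0 /negbTE Mkj; rewrite ffunE Mkj. Qed.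

Lemma sum_scaled_cols_ge (X : {set 'I_N}) x k :
  x \in X -> M k x -> q.-1 <= \sum_(j in X) scaled_cols q M j k.
Proof. by move=> xX Mkx; rewrite (bigD1 x) //= ffunE Mkx leq_addr. Qed.

Lemma sum_scaled_cols_le (X : {set 'I_N}) k :
  \sum_(j in X) scaled_cols q M j k <= q.-1 * #|X|.
Proof.
rewrite mulnC -sum_nat_const; apply: leq_sum => j _.
by rewrite ffunE; case: (M k j).
Qed.

Hypothesis M_disjunct : disjunct u M.

Lemma scaled_cols_inj : 1 < q -> 0 < u -> injective (scaled_cols q M).
Proof.
move=> q_gt1 u_gt0 a b eq_ab; apply/eqP; apply: contraT => a_neq_b.
have [||k /andP [Mka /forall_inP Mkb]] := @M_disjunct a [set b].
- by rewrite cards1.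
- by rewrite in_set1.
have := congr1 (fun f : {ffun 'I_n -> nat} => f k) eq_ab.
rewrite !ffunE Mka (negbTE (Mkb b (set11 b))) => /eqP.
by rewrite -subn1 subn_eq0 leqNgt q_gt1.
Qed.

Lemma scaled_cols_sq_disjunct Q eta :
  eta 0 = 0 -> (forall i, i < Q -> eta i < eta i.+1) ->
  eta 1 <= q.-1 -> q.-1 * u < eta Q -> sq_disjunct Q eta u (scaled_cols q M).
Proof.
move=> eta0 eta_incr eta1_le etaQ_gt X Z /andP [_ X_le_u] /andP [_ Z_le_u] X_incl_Z.
apply/subsetP => x xX; apply: contraT => xZ.
have [k /andP [Mkx /forall_inP Mk0]] := M_disjunct Z_le_u xZ.
have level_X := X_incl_Z k.
rewrite /syndrome (sum_scaled_cols_eq0 Mk0) level0 // in level_X.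
suff: 0 < level Q eta (\sum_(j in X) scaled_cols q M j k).
  by rewrite lt0n -leqn0 level_X.
apply: level_gt0 => //; apply/andP; split.
  exact: leq_trans eta1_le (sum_scaled_cols_ge xX Mkx).
apply: leq_ltn_trans (sum_scaled_cols_le X k) (leq_ltn_trans _ etaQ_gt).
by rewrite leq_mul2l X_le_u orbT.
Qed.

End ScaledColumns.

Theorem proposition2 (q u Q : nat) (eta : nat -> nat)
  (hq : 2 <= q) (hu : 1 <= u) (hQ : 2 <= Q)
  (heta0 : eta 0 = 0) (heta_incr : forall i, i < Q -> eta i < eta i.+1)
  (hetaQ : (q - 1) * u < eta Q) (heta1 : eta 1 <= q - 1) :
  (forall (n N : nat) (M : 'M[bool]_(n, N)), 1 <= n -> 1 <= N ->
     disjunct u M ->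
     qary_code q (scaled_cols q M) /\ sq_disjunct Q eta u (scaled_cols q M))
  /\
  (forall n N : nat, 1 <= n -> 1 <= N ->
     (exists M : 'M[bool]_(n, N), disjunct u M) ->
     exists c : 'I_N -> {ffun 'I_n -> nat},
       qary_code q c /\ sq_disjunct Q eta u c).
Proof.
rewrite subn1 in hetaQ heta1.
have scaled_code n N (M : 'M[bool]_(n, N)) : disjunct u M ->
    qary_code q (scaled_cols q M) /\ sq_disjunct Q eta u (scaled_cols q M).
  move=> M_disjunct; split; last exact: scaled_cols_sq_disjunct.
  by split; [exact: scaled_cols_inj M_disjunct hq hu | exact: scaled_cols_lt (ltnW hq)].
split=> [n N M _ _ | n N _ _ [M M_disjunct]]; first exact: scaled_code.
by exists (scaled_cols q M); apply: scaled_code.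
Qed.
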